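(* Let $M$ be a finite-dimensional left $\mathsf{VBr}_{r,t}(\omega)$-module with decomposition $M=\bigoplus_{\mathbf a,\mathbf i}1_{\mathbf a}M_{\mathbf i}$. Let $\mathbf a\in\mathrm{Seq}_{r,t}$, $k\in\{1,\dots,r+t-1\}$ with $\mathsf s_k\mathbf a\neq\mathbf a$, and $\mathbf i\in\mathbb C^{r+t}$; let $I=\{\mathbf i'\in\mathbb C^{r+t}:\mathrm i'_j=\mathrm i_j\text{ for }j\ne k,k+1,\ \mathrm i'_k+\mathrm i'_{k+1}=0\}$. Then $\hat s_k1_{\mathbf a}M_{\mathbf i}\subseteq1_{\mathsf s_k\mathbf a}M_{\mathsf s_k\mathbf i}$ if $\mathrm i_k+\mathrm i_{k+1}\neq0$, and $\hat s_k1_{\mathbf a}M_{\mathbf i}\subseteq\bigoplus_{\mathbf i'\in I}1_{\mathsf s_k\mathbf a}M_{\mathbf i'}$ if $\mathrm i_k+\mathrm i_{k+1}=0$.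
   Context: $\mathrm{Seq}_{r,t}$: sequences $\mathbf a\in\{\wedge,\vee\}^{r+t}$ with exactly $r$ entries $\wedge$; $J=\{1,\dots,r+t-1\}$; $\mathsf s_k$ swaps entries $k,k+1$ (of sequences and of vectors in $\mathbb C^{r+t}$). $\mathrm{Br}_{r,t}(\gamma)$: basis oriented Brauer diagrams $\mathbf a\to\mathbf b$ (perfect matchings between bottom row labelled $\mathbf a$ and top row labelled $\mathbf b$; bottom-to-top strands join equal labels, strands within a row join different labels), product by stacking (second factor below), $0$ if labels mismatch, loops replaced by $\gamma$. $1_{\mathbf a}$ identity; for $k\in J$: if $a_k=a_{k+1}$, $s_k1_{\mathbf a}$ crosses strands $k,k+1$ ($\mathbf a\to\mathbf a$); if $a_k\neq a_{k+1}$, $\hat s_k1_{\mathbf a}$ crossing $\mathbf a\to\mathsf s_k\mathbf a$, $e_k1_{\mathbf a}$ cap at bottom $k,k+1$ and cup at top $k,k+1$ ($\mathbf a\to\mathbf a$), $\hat e_k1_{\mathbf a}$ same shape $\mathbf a\to\mathsf s_k\mathbf a$; these are $0$ when the condition fails; $s_k=\sum_{\mathbf a}s_k1_{\mathbf a}$ etc. For $\omega=(\omega_j)_{j\ge0}\subset\mathbb C$, $\mathsf{VBr}_{r,t}(\omega)$ is the quotient of the free product $\mathrm{Br}_{r,t}(\omega_0)*\mathbb C[y_1,\dots,y_{r+t}]$ by: $y_i$ commutes with all $1_{\mathbf a}$, and with $s_k,\hat s_k,e_k,\hat e_k$ when $i\notin\{k,k+1\}$; $e_1y_1^je_11_{\mathbf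 a}=\omega_je_11_{\mathbf a}$ for $j\ge0$ and $(a_1,a_2)=(\wedge,\vee)$; for $a_k=a_{k+1}$: $s_ky_k1_{\mathbf a}-y_{k+1}s_k1_{\mathbf a}=-1_{\mathbf a}$, $s_ky_{k+1}1_{\mathbf a}-y_ks_k1_{\mathbf a}=1_{\mathbf a}$; $\hat s_ky_k-y_{k+1}\hat s_k=\hat e_k$, $\hat s_ky_{k+1}-y_k\hat s_k=-\hat e_k$; $e_k,\hat e_k$ are annihilated on both sides by $y_k+y_{k+1}$. $1_{\mathbf a}M_{\mathbf i}=\{v\in1_{\mathbf a}M:(y_k-\mathrm i_k)^Nv=0\ \forall k,\ N\gg0\}$. *)

From HB Require Import structures.
From mathcomp Require Import all_boot all_order all_algebra.
From mathcomp Require Import reals.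
From mathcomp Require Export complex.
Set Implicit Arguments.
Unset Strict Implicit.
Unset Printing Implicit Defensive.
Import Order.TTheory GRing.Theory Num.Theory.
Local Open Scope ring_scope.

(* Positions are 0-based: position j : 'I_n stands for the paper's j+1.
   The paper's k in {1,...,r+t-1} is our k with k.+1 < r+t, and the paper's
   entries k, k+1 are our positions k, k.+1. *)

Definition swp (n k : nat) (j : 'I_n) : 'I_n :=
  if val j == k then insubd j k.+1
  else if val j == k.+1 then insubd j k else j.

(* Sequences in {wedge,vee}^n: true = wedge, false = vee. *)
Definition bsq (n : nat) := {ffun 'I_n -> bool}.
Arguments bsq n%_N.

Definition Seqrt (r t : nat) : pred (bsq (r + t)) :=
  fun a => #|[pred j | a j]| == r.

Arguments Seqrt : clear implicits.
Arguments Seqrt r%_N t%_N.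
Definition swseq (n k : nat) (a : bsq n) : bsq n := [ffun j => a (swp k j)].
Definition swvec (T : Type) (n k : nat) (i : 'I_n -> T) : 'I_n -> T :=
  fun j => i (swp k j).

(* A finite-dimensional left VBr_{r,t}(omega)-module, presented concretely:
   M = K^N (column vectors), each generator acts by an N x N matrix, the
   algebra product being matrix product.  one a = action of 1_a,
   S k, Sh k, E k, Eh k = actions of s_k, \hat s_k, e_k, \hat e_k
   (the sums over all a), Y j = action of y_(j+1). *)
Record is_VBr_module (K : fieldType) (r t : nat) (omega : nat -> K) (N : nat)
    (one : bsq (r + t) -> 'M[K]_N)
    (S Sh E Eh : nat -> 'M[K]_N) (Y : 'I_(r + t) -> 'M[K]_N) : Prop := {
  one_out : forall a, a \notin Seqrt r t -> one a = 0;
  one_mul : forall a b, one a * one b = if a == b then one a else 0;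
  one_sum : \sum_(a in Seqrt r t) one a = 1;
  (* generators are only defined for 1 <= k <= r+t-1 *)
  gen_out : forall k, ~~ (k.+1 < r + t)%N -> [/\ S k = 0, Sh k = 0, E k = 0 & Eh k = 0];
  S_shape : forall k a, S k * one a = one a * S k * one a;
  E_shape : forall k a, E k * one a = one a * E k * one a;
  Sh_shape : forall k a, Sh k * one a = one (swseq k a) * Sh k * one a;
  Eh_shape : forall k a, Eh k * one a = one (swseq k a) * Eh k * one a;
  S_zero : forall k (a : bsq (r + t)) (hk : (k.+1 < r + t)%N),
      a (Ordinal (ltnW hk)) != a (Ordinal hk) -> S k * one a = 0;
  Sh_zero : forall k (a : bsq (r + t)) (hk : (k.+1 < r + t)%N),
      a (Ordinal (ltnW hk)) == a (Ordinal hk) -> Sh k * one a = 0;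
  E_zero : forall k (a : bsq (r + t)) (hk : (k.+1 < r + t)%N),
      a (Ordinal (ltnW hk)) == a (Ordinal hk) -> E k * one a = 0;
  Eh_zero : forall k (a : bsq (r + t)) (hk : (k.+1 < r + t)%N),
      a (Ordinal (ltnW hk)) == a (Ordinal hk) -> Eh k * one a = 0;
  S_one : forall k a, S k * one a = one a * S k;
  E_one : forall k a, E k * one a = one a * E k;
  Y_comm : forall i j, Y i * Y j = Y j * Y i;
  Y_one : forall i a, Y i * one a = one a * Y i;
  Y_gen : forall i k, val i != k -> val i != k.+1 ->
      [/\ Y i * S k = S k * Y i, Y i * Sh k = Sh k * Y i,
          Y i * E k = E k * Y i & Y i * Eh k = Eh k * Y i];
  E1_omega : forall (h : (1 < r + t)%N) (a : bsq (r + t)) (j : nat),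
      a (Ordinal (ltnW h)) -> ~~ a (Ordinal h) ->
      E 0 * Y (Ordinal (ltnW h)) ^+ j * E 0 * one a = omega j *: (E 0 * one a);
  S_Y : forall k (hk : (k.+1 < r + t)%N) (a : bsq (r + t)),
      a (Ordinal (ltnW hk)) == a (Ordinal hk) ->
      S k * Y (Ordinal (ltnW hk)) * one a - Y (Ordinal hk) * S k * one a = - one a
      /\ S k * Y (Ordinal hk) * one a - Y (Ordinal (ltnW hk)) * S k * one a = one a;
  Sh_Y : forall k (hk : (k.+1 < r + t)%N),
      Sh k * Y (Ordinal (ltnW hk)) - Y (Ordinal hk) * Sh k = Eh k
      /\ Sh k * Y (Ordinal hk) - Y (Ordinal (ltnW hk)) * Sh k = - Eh k;
  E_Y : forall k (hk : (k.+1 < r + t)%N),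
      let z := Y (Ordinal (ltnW hk)) + Y (Ordinal hk) in
      [/\ z * E k = 0, E k * z = 0, z * Eh k = 0 & Eh k * z = 0]
}.

(* 1_a M_i : v with 1_a v = v and (y_j - i_j)^m v = 0 for all j, some m. *)
Definition in_wt (K : fieldType) (n N : nat) (one : bsq n -> 'M[K]_N)
    (Y : 'I_n -> 'M[K]_N) (a : bsq n) (i : 'I_n -> K) (v : 'cV[K]_N) : Prop :=
  one a *m v = v /\
  forall j : 'I_n, exists m : nat, (Y j - (i j)%:M) ^+ m *m v = 0.

Definition in_sum_wt (K : fieldType) (n N : nat) (one : bsq n -> 'M[K]_N)
    (Y : 'I_n -> 'M[K]_N) (a : bsq n) (I : ('I_n -> K) -> Prop) (v : 'cV[K]_N) : Prop :=
  exists s : seq ('cV[K]_N), v = \sum_(u <- s) u /\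
    forall u, u \in s -> exists i', I i' /\ in_wt one Y a i' u.

From HB Require Import structures.
From mathcomp Require Import all_boot all_order all_algebra.
From mathcomp Require Import reals complex.
Import Order.TTheory GRing.Theory Num.Theory.
Local Open Scope ring_scope.

Set Implicit Arguments.
Unset Strict Implicit.
Unset Printing Implicit Defensive.

(* The dot-crossing relations for \hat s_k add up to say that \hat s_k commutes with
   z = y_k + y_{k+1}; it also commutes with y_j for j <> k, k+1 and maps 1_a M into
   1_{s_k a} M, so it preserves the generalized eigenvalues of z and of these y_j.
   Since \hat e_k z = 0, \hat e_k vanishes on the generalized eigenspace of z for an
   eigenvalue c <> 0; there the dot-crossing relations become \hat s_k y_k = y_{k+1} \hat s_k
   and \hat s_k y_{k+1} = y_k \hat s_k, which swaps the weights.  When c = 0, split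
   \hat s_k v into generalized eigenvectors of y_k by Cayley-Hamilton and Bezout: each
   component is a polynomial in y_k applied to \hat s_k v, so it keeps the properties
   above, and on a component with y_k-eigenvalue c' the operator y_{k+1} = z - y_k has
   generalized eigenvalue -c'. *)

Definition geigenvec (K : fieldType) (N : nat) (A : 'M[K]_N) (c : K) (v : 'cV[K]_N) :=
  exists m, (A - c%:M) ^+ m *m v = 0.

Section GeneralizedEigenvectors.
Variables (K : fieldType) (N : nat).
Implicit Types (A B P Q X Y Z : 'M[K]_N) (c d : K) (u v w : 'cV[K]_N).

Lemma comm_subr_scalar A B c : GRing.comm A B -> GRing.comm A (B - c%:M).
Proof. by move=> AB; apply: commrB => //; apply: comm_mx_scalar. Qed.

Lemma mulr_mulmx X Y v : (X * Y) *m v = X *m (Y *m v).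
Proof. by rewrite mulmxA. Qed.

Lemma comm_mulmx A B v : GRing.comm A B -> A *m (B *m v) = B *m (A *m v).
Proof. by move=> AB; rewrite !mulmxA !mulmxE AB. Qed.

Lemma geigenvec_comm A B c v :
  GRing.comm B A -> geigenvec A c v -> geigenvec A c (B *m v).
Proof.
move=> BA [m Am]; exists m.
by rewrite comm_mulmx ?Am ?mulmx0 //; apply/commr_sym/commrX/comm_subr_scalar.
Qed.

Lemma geigenvec_add A B c d v : GRing.comm A B ->
  geigenvec A c v -> geigenvec B d v -> geigenvec (A + B) (c + d) v.
Proof.
move=> AB [m Am] [n Bn]; exists (m + n)%N.
have -> : A + B - (c + d)%:M = (A - c%:M) + (B - d%:M).
  by rewrite raddfD /= opprD addrACA.
have AcBd : GRing.comm (A - c%:M) (B - d%:M).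
  by apply/comm_subr_scalar/commr_sym/comm_subr_scalar/commr_sym.
set U := A - c%:M in Am AcBd *; set V := B - d%:M in Bn AcBd *.
rewrite exprDn_comm // mulmx_suml big1 // => j _.
rewrite -[(_ *+ _) *m v]/(mulmxr v _) raddfMn /= mulr_mulmx.
case: (leqP n j) => [nj | jn].
  by rewrite -(subnK nj) exprD mulr_mulmx Bn mulmx0 mulmx0 mul0rn.
have mj : (m <= m + n - j)%N by rewrite -addnBA ?leq_addr // ltnW.
rewrite -(subnK mj) exprD mulr_mulmx.
have UV : GRing.comm (U ^+ m) (V ^+ j) by apply/commrX/commr_sym/commrX/commr_sym.
by rewrite (comm_mulmx _ UV) Am mulmx0 mulmx0 mul0rn.
Qed.

Lemma geigenvec_opp A c v : geigenvec A c v -> geigenvec (- A) (- c) v.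
Proof.
move=> [m Am]; exists m.
by rewrite raddfN -opprD exprNn mulr_mulmx Am mulmx0.
Qed.

Lemma geigenvec_annihilated A B c v :
  B * A = 0 -> c != 0 -> geigenvec A c v -> B *m v = 0.
Proof.
move=> BA c0 [m Am].
have BAc : B * (A - c%:M) = - c *: B.
  by rewrite mulrBr BA sub0r -mulmxE mul_mx_scalar scaleNr.
have BAcv n : B *m ((A - c%:M) ^+ n *m v) = (- c) ^+ n *: (B *m v).
  elim: n => [|n IH]; first by rewrite mul1mx scale1r.
  by rewrite exprS mulr_mulmx mulmxA mulmxE BAc -scalemxAl IH scalerA -exprS.
move/eqP: (BAcv m); rewrite Am mulmx0 eq_sym scalemx_eq0 expf_eq0 oppr_eq0.
by rewrite (negbTE c0) andbF => /eqP.
Qed.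

Lemma geigenvec_intertwine X P Q Z c d u : GRing.comm P Z ->
  (forall w, geigenvec Z d w -> X *m (P *m w) = Q *m (X *m w)) ->
  geigenvec Z d u -> geigenvec P c u -> geigenvec Q c (X *m u).
Proof.
move=> PZ XPQ Zu [m Pu]; exists m.
suff -> : (Q - c%:M) ^+ m *m (X *m u) = X *m ((P - c%:M) ^+ m *m u) by rewrite Pu mulmx0.
elim: m {Pu} u Zu => [|m IH] u Zu; first by rewrite !mul1mx.
have step : (Q - c%:M) *m (X *m u) = X *m ((P - c%:M) *m u).
  by rewrite !mulmxBl !mul_scalar_mx mulmxBr XPQ // scalemxAr.
rewrite !exprSr !mulr_mulmx step IH //.
by apply: geigenvec_comm Zu; apply/commr_sym/comm_subr_scalar/commr_sym.
Qed.

Lemma geigenvec_transfer A P c w u : GRing.comm P A ->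
  (forall B, GRing.comm B A -> B *m w = 0 -> B *m u = 0) ->
  geigenvec P c w -> geigenvec P c u.
Proof.
move=> PA Bwu [m Pw]; exists m; apply: Bwu Pw.
exact/commr_sym/commrX/comm_subr_scalar/commr_sym.
Qed.

End GeneralizedEigenvectors.

Lemma horner_mx_mulmx (K : fieldType) n (A : 'M[K]_n.+1) (p q : {poly K})
    (w : 'cV_n.+1) :
  horner_mx A (p * q) *m w = horner_mx A p *m (horner_mx A q *m w).
Proof. by rewrite rmorphM mulmxA. Qed.

Lemma horner_mx_coprime_decomposition (K : fieldType) n (A : 'M[K]_n.+1)
    (I : eqType) (s : seq I) (p : I -> {poly K}) (w : 'cV_n.+1) :
  uniq s -> {in s &, forall i j, i != j -> coprimep (p i) (p j)} ->
  horner_mx A (\prod_(i <- s) p i) *m w = 0 ->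
  exists c : I -> {poly K}, w = \sum_(i <- s) horner_mx A (c i) *m w /\
    forall i, i \in s -> horner_mx A (p i) *m (horner_mx A (c i) *m w) = 0.
Proof.
elim: s w => [|i s IH] w.
  by move=> _ _; rewrite big_nil rmorph1 mul1mx => ->; exists (fun=> 0); rewrite big_nil.
rewrite cons_uniq => /andP [i_s s_uniq] cop.
set q := \prod_(j <- s) p j; rewrite big_cons -/q => piqw.
have : coprimep (p i) q.
  rewrite /q big_seq; apply: (big_ind (coprimep (p i))) => [|q1 q2|j js].
  - exact: coprimep1.
  - by rewrite coprimepMr => -> ->.
  - apply: cop; rewrite ?inE ?eqxx ?js ?orbT //.
    by apply/eqP => ij; rewrite ij js in i_s.
case/Bezout_eq1_coprimepP => [[u1 u2] /= bezout].
set w1 := horner_mx A (u1 * p i) *m w.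
have qw1 : horner_mx A q *m w1 = 0.
  by rewrite -horner_mx_mulmx mulrCA [q * _]mulrC horner_mx_mulmx piqw mulmx0.
have [|c' [w1E c'_ann]] := IH w1 s_uniq _ qw1.
  by move=> j1 j2 j1s j2s; apply: cop; rewrite inE ?j1s ?j2s orbT.
exists (fun j => if j == i then u2 * q else c' j * (u1 * p i)); split.
  rewrite big_cons eqxx big_seq_cond.
  rewrite (eq_bigr (fun j => horner_mx A (c' j) *m w1)); last first.
    move=> j /andP [js _]; have ji : j != i by apply/eqP => ji; rewrite -ji js in i_s.
    by rewrite (negPf ji) horner_mx_mulmx.
  by rewrite -big_seq_cond -w1E -mulmxDl -rmorphD addrC bezout rmorph1 mul1mx.
move=> j; rewrite inE; case: eqP => [-> _ | _ /= js].
  by rewrite -horner_mx_mulmx mulrCA horner_mx_mulmx piqw mulmx0.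
by rewrite horner_mx_mulmx c'_ann.
Qed.

Lemma geigenvec_decomposition (F : closedFieldType) N (A : 'M[F]_N) (w : 'cV_N) :
  exists l : seq (F * 'cV_N), w = \sum_(x <- l) x.2 /\
    forall x, x \in l -> geigenvec A x.1 x.2 /\
      forall B, GRing.comm B A -> B *m w = 0 -> B *m x.2 = 0.
Proof.
case: N A w => [|n] A w; first by exists [::]; rewrite big_nil flatmx0.
have [s charA] := closed_field_poly_normal (char_poly A).
rewrite (monicP (char_poly_monic A)) scale1r in charA.
pose p z := ('X - z%:P) ^+ count_mem z s.
have [|||c [wE c_ann]] := @horner_mx_coprime_decomposition _ _ A _ (undup s) p w.
- exact: undup_uniq.
- move=> z1 z2 _ _ z12; apply/coprimep_expl/coprimep_expr/coprimep_XsubC2.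
  by rewrite subr_eq0 eq_sym.
- by rewrite prodr_undup_exp_count -charA Cayley_Hamilton mul0mx.
exists [seq (z, horner_mx A (c z) *m w) | z <- undup s]; split; first by rewrite big_map.
move=> _ /mapP [z zs ->] /=; split.
  exists (count_mem z s).
  by rewrite -(c_ann z zs) rmorphXn rmorphB /= horner_mx_X horner_mx_C.
move=> B BA Bw; rewrite mulmxA.
have AB : comm_mx A B := commr_sym BA.
by rewrite -(comm_horner_mx (c z) AB) -mulmxA Bw mulmx0.
Qed.

Section VBrModule.
Variables (K : fieldType) (r t : nat) (omega : nat -> K) (N : nat).
Variables (one : bsq (r + t) -> 'M[K]_N) (S Sh E Eh : nat -> 'M[K]_N).
Variable Y : 'I_(r + t) -> 'M[K]_N.
Hypothesis HM : is_VBr_module omega one S Sh E Eh Y.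
Variables (k : nat) (hk : (k.+1 < r + t)%N).

Local Notation pos_k := (Ordinal (ltnW hk)).
Local Notation pos_k1 := (Ordinal hk).
Local Notation y_sum := (Y pos_k + Y pos_k1).

Lemma swp_pos_k : swp k pos_k = pos_k1.
Proof. by apply: val_inj; rewrite /swp /= eqxx val_insubd hk. Qed.

Lemma swp_pos_k1 : swp k pos_k1 = pos_k.
Proof. by apply: val_inj; rewrite /swp /= gtn_eqF // eqxx val_insubd ltnW. Qed.

Lemma swp_other (j : 'I_(r + t)) : val j != k -> val j != k.+1 -> swp k j = j.
Proof. by move=> jk jk1; rewrite /swp (negPf jk) (negPf jk1). Qed.

Lemma Sh_one_swseq a (v : 'cV[K]_N) :
  one a *m v = v -> one (swseq k a) *m (Sh k *m v) = Sh k *m v.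
Proof. by move=> av; rewrite -av !mulmxA !mulmxE (Sh_shape HM). Qed.

Lemma comm_Y_Sh j : val j != k -> val j != k.+1 -> GRing.comm (Y j) (Sh k).
Proof. by move=> jk jk1; have [_ YSh _ _] := Y_gen HM jk jk1. Qed.

Lemma comm_Sh_Ysum : GRing.comm (Sh k) y_sum.
Proof.
have [Sh_y Sh_y1] := Sh_Y HM hk.
apply/eqP; rewrite /GRing.comm -subr_eq0 mulrDl mulrDr.
by rewrite [Y pos_k * _ + _]addrC opprD addrACA Sh_y Sh_y1 subrr.
Qed.

Lemma geigenvec_Ysum a i v :
  in_wt one Y a i v -> geigenvec y_sum (i pos_k + i pos_k1) v.
Proof. by move=> [_ vY]; apply: geigenvec_add; [exact: (Y_comm HM) | exact: vY ..]. Qed.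

Lemma geigenvec_Sh_other a i v j :
  in_wt one Y a i v -> val j != k -> val j != k.+1 -> geigenvec (Y j) (i j) (Sh k *m v).
Proof.
by move=> [_ vY] jk jk1; apply: geigenvec_comm (vY j); apply/commr_sym/comm_Y_Sh.
Qed.

Lemma Sh_Y_swap c u : c != 0 -> geigenvec y_sum c u ->
  Sh k *m (Y pos_k *m u) = Y pos_k1 *m (Sh k *m u) /\
  Sh k *m (Y pos_k1 *m u) = Y pos_k *m (Sh k *m u).
Proof.
move=> c0 uc; have [_ _ _ Eh_y] := E_Y HM hk.
have Eh_u : Eh k *m u = 0 := geigenvec_annihilated Eh_y c0 uc.
have [Sh_y Sh_y1] := Sh_Y HM hk.
by split; apply/eqP;
  rewrite -subr_eq0 !mulmxA -mulmxBl !mulmxE ?Sh_y ?Sh_y1 ?mulNmx Eh_u ?oppr0.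
Qed.

Lemma Sh_in_wt_swap a i v : i pos_k + i pos_k1 != 0 ->
  in_wt one Y a i v -> in_wt one Y (swseq k a) (swvec k i) (Sh k *m v).
Proof.
move=> c0 v_wt; have [v_a vY] := v_wt; have v_sum := geigenvec_Ysum v_wt.
have comm_y_sum j : GRing.comm (Y j) y_sum by apply: commrD; apply: (Y_comm HM).
split; first exact: Sh_one_swseq.
move=> j; rewrite /swvec; case: (eqVneq (val j) k) => [jk | jk].
  have -> : j = pos_k by apply: val_inj.
  rewrite swp_pos_k; apply: geigenvec_intertwine (comm_y_sum _) _ v_sum (vY _).
  by move=> w /(Sh_Y_swap c0) [].
case: (eqVneq (val j) k.+1) => [jk1 | jk1].
  have -> : j = pos_k1 by apply: val_inj.
  rewrite swp_pos_k1; apply: geigenvec_intertwine (comm_y_sum _) _ v_sum (vY _).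
  by move=> w /(Sh_Y_swap c0) [].
by rewrite swp_other //; exact: geigenvec_Sh_other v_wt jk jk1.
Qed.

Definition wt_pair (i : 'I_(r + t) -> K) (c : K) : 'I_(r + t) -> K :=
  fun j => if j == pos_k then c else if j == pos_k1 then - c else i j.

Lemma wt_pair_other i c j : val j != k -> val j != k.+1 -> wt_pair i c j = i j.
Proof.
move=> jk jk1; rewrite /wt_pair.
by rewrite -val_eqE (negPf jk) -val_eqE (negPf jk1).
Qed.

Lemma wt_pair_sum i c : wt_pair i c pos_k + wt_pair i c pos_k1 = 0.
Proof. by rewrite /wt_pair eqxx -val_eqE /= gtn_eqF // eqxx subrr. Qed.

Lemma Sh_component_in_wt a i v u c : i pos_k + i pos_k1 = 0 -> in_wt one Y a i v ->
  (forall B, GRing.comm B (Y pos_k) -> B *m (Sh k *m v) = 0 -> B *m u = 0) ->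
  geigenvec (Y pos_k) c u -> in_wt one Y (swseq k a) (wt_pair i c) u.
Proof.
move=> i0 v_wt killed uc.
have Shv_sum : geigenvec y_sum 0 (Sh k *m v).
  by rewrite -i0; apply: geigenvec_comm (geigenvec_Ysum v_wt); exact: comm_Sh_Ysum.
have y_sum_y : GRing.comm y_sum (Y pos_k) by apply/commr_sym/commrD; apply: (Y_comm HM).
have u_sum : geigenvec y_sum 0 u := geigenvec_transfer y_sum_y killed Shv_sum.
split.
  apply/eqP; rewrite -subr_eq0 -{2}[u]mul1mx -mulmxBl; apply/eqP/killed.
    by apply/commr_sym/commrB; [exact: (Y_one HM) | exact: commr1].
  by rewrite mulmxBl mul1mx (Sh_one_swseq v_wt.1) subrr.
move=> j; rewrite /wt_pair; case: eqVneq => [-> | jk]; first exact: uc.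
case: eqVneq => [-> | jk1].
  have -> : Y pos_k1 = y_sum - Y pos_k by rewrite addrC addKr.
  rewrite -[- c]add0r; apply: geigenvec_add u_sum (geigenvec_opp uc).
  exact/commrN/commr_sym.
have jk' : val j != k by apply: contraNneq jk => jv; apply/eqP/val_inj.
have jk1' : val j != k.+1 by apply: contraNneq jk1 => jv; apply/eqP/val_inj.
exact: geigenvec_transfer (Y_comm HM _ _) killed (geigenvec_Sh_other v_wt jk' jk1').
Qed.

End VBrModule.

Theorem lemma3p3 (R : realType) (r t : nat) (omega : nat -> R[i]) (N : nat)
    (one : bsq (r + t) -> 'M[R[i]]_N) (S Sh E Eh : nat -> 'M[R[i]]_N)
    (Y : 'I_(r + t) -> 'M[R[i]]_N)
    (HM : is_VBr_module omega one S Sh E Eh Y)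
    (a : bsq (r + t)) (Ha : a \in Seqrt r t)
    (k : nat) (hk : (k.+1 < r + t)%N) (Hsa : swseq k a != a)
    (i : 'I_(r + t) -> R[i]) (v : 'cV[R[i]]_N) (Hv : in_wt one Y a i v) :
  let ik := i (Ordinal (ltnW hk)) in
  let ik1 := i (Ordinal hk) in
  (ik + ik1 != 0 -> in_wt one Y (swseq k a) (swvec k i) (Sh k *m v)) /\
  (ik + ik1 = 0 ->
     in_sum_wt one Y (swseq k a)
       (fun i' => (forall j : 'I_(r + t), val j != k -> val j != k.+1 -> i' j = i j)
                  /\ i' (Ordinal (ltnW hk)) + i' (Ordinal hk) = 0)
       (Sh k *m v)).
Proof.
move=> ik ik1; split => i0; first exact: (Sh_in_wt_swap HM).
have [l [Shv_sum l_spec]] := geigenvec_decomposition (Y (Ordinal (ltnW hk))) (Sh k *m v).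
exists (map snd l); split; first by rewrite big_map.
move=> _ /mapP [x xl ->]; have [x_geig x_killed] := l_spec x xl.
exists (wt_pair hk i x.1); split.
  by split; [move=> j; exact: wt_pair_other | exact: wt_pair_sum].
exact: (Sh_component_in_wt HM i0 Hv x_killed x_geig).
Qed.
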